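(* Let $s\ge1$ and let constants $M,N,m_1,m_2,n_1,n_2$ satisfy $0<N<1$, $M>N+s$, $n_1>1+\sqrt3$, $n_2>1$, $m_1>\sqrt2$ and $$m_2>\max\Big[n_2,\ \Big(\frac{m_1n_1+Mm_1^2n_1+n_1^2}{m_1^2}\Big)^{1/(1-N)},\ \Big(\frac{n_1}{2m_1}(1+\sqrt5)\Big)^{1/(M-N-s)}\Big].$$ Set $m(0)=m_1m_2^M$, $n(0)=n_1n_2^N$. Consider the system $$\dot b=-\tfrac12 b^2-(t+1)^s a^2-a+1,\qquad \dot a=-ba,$$ and let $\Omega=\{(a,b)\in\mathbb R^2:\ a>0,\ b>0,\ b>m(0)a-n(0)\}$. If $(a_0,b_0)\in\Omega$, then $0<b(t)$ and $a(t)\le a_0$ for all $t\ge0$. *)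

From Stdlib Require Import Reals.
From Coquelicot Require Import Coquelicot.
Open Scope R_scope.

Definition m2_bound (s M N m1 n1 n2 : R) : R :=
  Rmax n2
    (Rmax (Rpower ((m1 * n1 + M * m1 ^ 2 * n1 + n1 ^ 2) / m1 ^ 2) (1 / (1 - N)))
          (Rpower (n1 / (2 * m1) * (1 + sqrt 5)) (1 / (M - N - s)))).

Definition m0 (M m1 m2 : R) : R := m1 * Rpower m2 M.
Definition n0 (N n1 n2 : R) : R := n1 * Rpower n2 N.

Definition Omega (M N m1 m2 n1 n2 : R) (a b : R) : Prop :=
  0 < a /\ 0 < b /\ b > m0 M m1 m2 * a - n0 N n1 n2.

From Stdlib Require Import Reals Lra Psatz Classical.
From Coquelicot Require Import Coquelicot.
Open Scope R_scope.

(* Write n = n(0), m(t) = m1 (m2 + t)^M and G = b - m(t) a + n, so that Omega says that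
   a, b and G are positive at t = 0.  They stay positive for all t >= 0: at a first time T
   where one of them vanishes, a cannot, since a' = -b a is linear in a; and a function
   that is positive before T and vanishes at T has a nonpositive derivative there, whereas
   b' > 0 where b = 0 <= G and G' > 0 where G = 0 <= b (with a >= 0).  Scaling by powers of P = m2 + T, with
   u = n / m(T), the first estimate reduces to y + y^2 < 1 for y < (sqrt 5 - 1) / 2 (the
   third term of the bound on m2), the second to positivity of G' at a = u (the second
   term) and its monotonicity in a beyond u (from m1 (n1 - 1) > sqrt 6).  Finally
   a' = -b a < 0 gives a(t) <= a(0). *)

Lemma Rpower_gt_0 (x y : R) : 0 < Rpower x y.
Proof. apply exp_pos. Qed.

Lemma Rpower_ge_1 (x y : R) : 1 <= x -> 0 <= y -> 1 <= Rpower x y.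
Proof. intros Hx Hy. rewrite <- (Rpower_O x) by lra. apply Rle_Rpower; lra. Qed.

Lemma Rle_Rpower_l_nonpos (x y z : R) : z <= 0 -> 0 < x <= y -> Rpower y z <= Rpower x z.
Proof.
  intros Hz Hxy. replace z with (- - z) by ring. rewrite !(Rpower_Ropp _ (- z)).
  apply Rinv_le_contravar; [apply Rpower_gt_0|apply Rle_Rpower_l; lra].
Qed.

(* If [c ^ (1/x) < m <= P] then [c < m ^ x <= P ^ x]. *)
Lemma Rpower_root_bound (c x m P : R) :
  0 < c -> 0 < x -> Rpower c (1 / x) < m -> m <= P -> c * Rpower P (- x) < 1.
Proof.
  intros Hc Hx Hcm HmP.
  assert (Hm : 0 < m) by (pose proof (Rpower_gt_0 c (1 / x)); lra).
  assert (Hcx : c < Rpower m x).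
  { rewrite <- (Rpower_1 c) at 1 by exact Hc.
    replace 1 with (1 / x * x) by (field; lra). rewrite <- Rpower_mult.
    apply Rlt_Rpower_l; [exact Hx|split; [apply Rpower_gt_0|exact Hcm]]. }
  assert (HPm : Rpower P (- x) <= / Rpower m x).
  { rewrite <- Rpower_Ropp. apply Rle_Rpower_l_nonpos; lra. }
  pose proof (Rpower_gt_0 m x).
  apply Rle_lt_trans with (c * / Rpower m x); [apply Rmult_le_compat_l; lra|].
  apply (Rmult_lt_reg_r (Rpower m x)); [lra|]. field_simplify; lra.
Qed.

Lemma real_induction (P : R -> Prop) :
  P 0 ->
  (forall T, 0 < T -> (forall u, 0 <= u < T -> P u) -> P T) ->
  (forall T, 0 <= T -> P T -> at_right T P) ->
  forall t, 0 <= t -> P t.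
Proof.
  intros H0 Hstep Hopen t Ht.
  set (E := fun x => x <= t /\ forall u, 0 <= u <= x -> P u).
  assert (HE0 : E 0) by (split; [lra|intros u Hu; replace u with 0 by lra; exact H0]).
  destruct (completeness E) as [T [HTub HTlub]].
  { exists t. intros x Hx; apply Hx. }
  { exists 0; exact HE0. }
  assert (HT0 : 0 <= T) by exact (HTub 0 HE0).
  assert (HTt : T <= t) by (apply HTlub; intros x Hx; apply Hx).
  assert (Hbefore : forall u, 0 <= u < T -> P u).
  { intros u Hu. apply NNPP; intros HPu.
    enough (T <= u) by lra.
    apply HTlub; intros x [_ Hx].
    destruct (Rle_lt_dec x u) as [Hxu|Hux]; [exact Hxu|].
    exfalso; apply HPu, Hx; lra. }
  assert (HPT : P T).
  { destruct (Req_dec T 0) as [->|HT0']; [exact H0|]. apply Hstep; [lra|exact Hbefore]. }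
  destruct (Req_dec T t) as [<-|HTt']; [exact HPT|].
  destruct (Hopen T HT0 HPT) as [eps Heps].
  assert (Hafter : forall u, T < u < T + eps -> P u).
  { intros u Hu. apply Heps; [|lra]. change (Rabs (u - T) < eps). rewrite Rabs_pos_eq; lra. }
  set (x := Rmin (T + eps / 2) t).
  assert (Hx : T < x <= t).
  { unfold x, Rmin. destruct (Rle_dec _ _); pose proof (cond_pos eps); lra. }
  enough (E x) by (pose proof (HTub x H); lra).
  split; [lra|]. intros u Hu.
  destruct (Rtotal_order u T) as [Hlt|[->|Hgt]]; [apply Hbefore; lra|exact HPT|].
  apply Hafter. split; [lra|].
  enough (x <= T + eps / 2) by (pose proof (cond_pos eps); lra). apply Rmin_l.
Qed.

Lemma continuous_of_is_derive (f : R -> R) (t l : R) :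
  is_derive f t l -> filterlim f (locally t) (locally (f t)).
Proof.
  intros Hd. apply (ex_derive_continuous (K := R_AbsRing) (V := R_NormedModule)).
  exists l; exact Hd.
Qed.

Lemma MVT_is_derive (f df : R -> R) (x y : R) : x <= y ->
  (forall t, x <= t <= y -> is_derive f t (df t)) ->
  exists c, x <= c <= y /\ f y - f x = df c * (y - x).
Proof.
  intros Hxy Hd.
  destruct (MVT_gen f x y df) as [c Hc]; rewrite ?Rmin_left, ?Rmax_right in * by lra.
  - intros t Ht. apply Hd. lra.
  - intros t Ht. apply continuity_pt_filterlim, (continuous_of_is_derive f t (df t)), Hd, Ht.
  - exists c. exact Hc.
Qed.

Lemma nonneg_of_pos_before (f : R -> R) (T l : R) : 0 < T -> is_derive f T l ->
  (forall u, 0 <= u < T -> 0 < f u) -> 0 <= f T.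
Proof.
  intros HT Hd Hpos.
  assert (Hlim : filterlim f (at_left T) (locally (f T))).
  { eapply filterlim_filter_le_1; [apply filter_le_within|].
    exact (continuous_of_is_derive f T l Hd). }
  assert (Hev : at_left T (fun u => 0 <= f u)).
  { exists (mkposreal T HT). intros u Hu HuT.
    change (Rabs (u - T) < T) in Hu. apply Rabs_def2 in Hu. apply Rlt_le, Hpos. lra. }
  exact (filterlim_le (fun _ => 0) f 0 (f T) Hev (filterlim_const 0) Hlim).
Qed.

Lemma is_derive_nonpos_at_first_zero (f : R -> R) (T l : R) : 0 < T -> is_derive f T l ->
  f T = 0 -> (forall u, 0 <= u < T -> 0 < f u) -> l <= 0.
Proof.
  intros HT Hd HfT Hpos. apply Rnot_lt_le; intros Hl.
  apply is_derive_Reals in Hd. destruct (Hd l Hl) as [d Hdl].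
  pose proof (cond_pos d) as Hd0.
  set (h := - Rmin d T / 2).
  assert (Hh : - d < h < 0 /\ - T < h).
  { unfold h, Rmin. destruct (Rle_dec d T); lra. }
  specialize (Hdl h ltac:(lra) ltac:(rewrite Rabs_left; lra)).
  assert (Hq : (f (T + h) - f T) / h < 0).
  { rewrite HfT, Rminus_0_r. apply Rdiv_pos_neg; [apply Hpos|]; lra. }
  apply Rabs_def2 in Hdl. lra.
Qed.

Lemma pos_of_is_derive_linear (f g : R -> R) (x y K : R) : x <= y ->
  (forall t, x <= t <= y -> is_derive f t (- g t * f t)) ->
  (forall t, x <= t <= y -> 0 <= f t /\ g t <= K) ->
  0 < f x -> 0 < f y.
Proof.
  intros Hxy Hd Hfg Hfx.
  (* [f (t) e^(K t)] is nondecreasing on [x, y] *)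
  destruct (MVT_is_derive (fun t => f t * exp (K * t))
              (fun t => f t * exp (K * t) * (K - g t)) x y Hxy) as [c [Hc Hmvt]].
  { intros t Ht.
    replace (f t * exp (K * t) * (K - g t))
      with (- g t * f t * exp (K * t) + f t * (K * exp (K * t))) by ring.
    apply (is_derive_mult f (fun t => exp (K * t))); [apply Hd, Ht| |intros; apply Rmult_comm].
    auto_derive; [exact I|ring]. }
  destruct (Hfg c Hc) as [Hfc Hgc].
  pose proof (exp_pos (K * x)). pose proof (exp_pos (K * y)). pose proof (exp_pos (K * c)).
  assert (0 <= f c * exp (K * c) * (K - g c) * (y - x)).
  { repeat apply Rmult_le_pos; lra. }
  assert (0 < f y * exp (K * y)) by nra.
  nra.
Qed.

Lemma le_at_0_of_is_derive_nonpos (f df : R -> R) :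
  filterlim f (at_right 0) (locally (f 0)) ->
  (forall t, 0 < t -> is_derive f t (df t)) -> (forall t, 0 < t -> df t <= 0) ->
  forall t, 0 <= t -> f t <= f 0.
Proof.
  intros Hf0 Hd Hdf t Ht.
  destruct (Req_dec t 0) as [->|Ht0]; [lra|].
  assert (Hev : at_right 0 (fun u => f t <= f u)).
  { exists (mkposreal t ltac:(lra)). intros u Hu Hu0.
    change (Rabs (u - 0) < t) in Hu. apply Rabs_def2 in Hu.
    destruct (MVT_is_derive f df u t) as [c [Hc Hmvt]]; [lra|intros; apply Hd; lra|].
    assert (df c <= 0) by (apply Hdf; lra). nra. }
  exact (filterlim_le (fun _ => f t) f (f t) (f 0) Hev (filterlim_const _) Hf0).
Qed.

Lemma right_continuous_on_nonneg (f df : R -> R) :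
  filterlim f (at_right 0) (locally (f 0)) -> (forall t, 0 < t -> is_derive f t (df t)) ->
  forall T, 0 <= T -> filterlim f (at_right T) (locally (f T)).
Proof.
  intros Hf0 Hd T HT. destruct (Req_dec T 0) as [->|HT0]; [exact Hf0|].
  eapply filterlim_filter_le_1; [apply filter_le_within|].
  apply (continuous_of_is_derive f T (df T)), Hd. lra.
Qed.

Lemma filterlim_sub_mul_add {T} {F : (T -> Prop) -> Prop} {FF : Filter F}
  (f g h : T -> R) (lf lg lh c : R) :
  filterlim f F (locally lf) -> filterlim g F (locally lg) -> filterlim h F (locally lh) ->
  filterlim (fun t => g t - h t * f t + c) F (locally (lg - lh * lf + c)).
Proof.
  intros Hf Hg Hh. unfold Rminus.
  eapply filterlim_comp_2; [|apply filterlim_const|apply (filterlim_plus (V := R_NormedModule))].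
  eapply filterlim_comp_2; [exact Hg| |apply (filterlim_plus (V := R_NormedModule))].
  eapply filterlim_comp; [|apply (filterlim_opp (V := R_NormedModule))].
  eapply filterlim_comp_2; [exact Hh|exact Hf|apply (filterlim_mult (K := R_AbsRing))].
Qed.

Lemma filterlim_eventually_pos {T} {F : (T -> Prop) -> Prop} (f : T -> R) (l : R) :
  filterlim f F (locally l) -> 0 < l -> F (fun t => 0 < f t).
Proof. intros Hf Hl. exact (Hf _ (open_gt 0 l Hl)). Qed.

Lemma is_derive_Rpower_shift (K x y : R) : 0 < K + x ->
  is_derive (fun t => Rpower (K + t) y) x (y * Rpower (K + x) (y - 1)).
Proof.
  intros Hx. apply is_derive_Reals.
  rewrite <- (Rmult_1_r (y * _)).
  apply (derivable_pt_lim_comp (fun t => K + t) (fun z => Rpower z y)).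
  - rewrite <- (Rplus_0_l 1).
    apply derivable_pt_lim_plus; [apply derivable_pt_lim_const|apply derivable_pt_lim_id].
  - now apply derivable_pt_lim_power.
Qed.

Lemma golden_quadratic_lt_1 (y : R) : 0 <= y -> y * (1 + sqrt 5) < 2 -> y + y ^ 2 < 1.
Proof.
  intros Hy Hy5. pose proof (sqrt_sqrt 5 ltac:(lra)). pose proof (sqrt_pos 5).
  (* [y < (sqrt 5 - 1) / 2], the positive root of [y + y ^ 2 = 1] *)
  assert (2 * y < sqrt 5 - 1) by nra.
  nra.
Qed.

Lemma db_pos_of_bounds (S a y : R) : 0 <= S -> 0 <= a -> a <= y -> S * a <= y ->
  y * (1 + sqrt 5) < 2 -> 0 < 1 - S * a ^ 2 - a.
Proof.
  intros HS Ha Hay HSa Hy.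
  pose proof (golden_quadratic_lt_1 y ltac:(lra) Hy).
  assert (a * (S * a) <= y * y) by (apply Rmult_le_compat; nra).
  nra.
Qed.

Lemma dG_pos_of_bounds (S mm mp u a : R) : 0 <= S -> 0 <= mp -> 0 < u -> u <= a ->
  S * u ^ 2 + u + mp * u < 1 -> 1 + mp <= (mm ^ 2 - 2 * S) * u ->
  0 < - / 2 * (mm * a - mm * u) ^ 2 - S * a ^ 2 - a + 1 - mp * a + mm * (mm * a - mm * u) * a.
Proof.
  intros HS Hmp Hu Hua Hfu Hslope.
  set (A := mm ^ 2 / 2 - S).
  assert (HA : 0 < A) by (unfold A; nra).
  (* the value at [a = u] plus a term that is nonnegative for [a >= u] *)
  replace (- / 2 * (mm * a - mm * u) ^ 2 - S * a ^ 2 - a + 1 - mp * a + mm * (mm * a - mm * u) * a)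
    with ((1 - S * u ^ 2 - u - mp * u) + (a - u) * (A * (a + u) - (1 + mp))) by (unfold A; field).
  assert (0 <= A * (a + u) - (1 + mp)) by (unfold A in *; nra).
  nra.
Qed.

Section Estimates.

Variables s M N m1 m2 n1 n2 : R.
Hypotheses (Hs : 1 <= s) (HN0 : 0 < N) (HN1 : N < 1) (HM : M > N + s)
  (Hn1 : n1 > 1 + sqrt 3) (Hn2 : n2 > 1) (Hm1 : m1 > sqrt 2)
  (Hm2 : m2 > m2_bound s M N m1 n1 n2).

Definition m (t : R) : R := m1 * Rpower (m2 + t) M.
Definition dm (t : R) : R := m1 * (M * Rpower (m2 + t) (M - 1)).

Let c := (m1 * n1 + M * m1 ^ 2 * n1 + n1 ^ 2) / m1 ^ 2.

Lemma m1_pos : 0 < m1.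
Proof. pose proof (sqrt_pos 2). lra. Qed.

Lemma n1_gt_1 : 1 < n1.
Proof. pose proof (sqrt_pos 3). lra. Qed.

Lemma c_eq : c = (n1 / m1) ^ 2 + n1 / m1 + M * n1.
Proof. pose proof m1_pos. unfold c. field. lra. Qed.

Lemma sqrt5_lt_m1_n1 : sqrt 5 < m1 * (n1 - 1).
Proof.
  pose proof (sqrt_pos 2). pose proof (sqrt_pos 3).
  assert (sqrt 5 < sqrt 2 * sqrt 3).
  { rewrite <- sqrt_mult by lra. apply sqrt_lt_1; lra. }
  assert (sqrt 2 * sqrt 3 < m1 * (n1 - 1)) by nra.
  lra.
Qed.

Lemma m2_gt_n2 : n2 < m2.
Proof. eapply Rle_lt_trans; [apply Rmax_l|exact Hm2]. Qed.

Lemma is_derive_m (t : R) : 0 <= t -> is_derive m t (dm t).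
Proof.
  intros Ht. apply is_derive_scal, is_derive_Rpower_shift.
  pose proof m2_gt_n2. lra.
Qed.

Section AtTime.

Variable T : R.
Hypothesis HT : 0 <= T.

Let P := m2 + T.
Let S := Rpower (T + 1) s.
Let n := n0 N n1 n2.
Let u := n / m T.
Let y := n1 / m1 * Rpower P (s + N - M).
Let e := Rpower P (N - 1).

Lemma P_gt_1 : 1 < P.
Proof. pose proof m2_gt_n2. unfold P. lra. Qed.

Lemma y_golden : y * (1 + sqrt 5) < 2.
Proof.
  pose proof (sqrt_pos 5). pose proof m1_pos. pose proof n1_gt_1.
  assert (Hk : n1 / (2 * m1) * (1 + sqrt 5) * Rpower P (- (M - N - s)) < 1).
  { apply (Rpower_root_bound _ _ m2).
    - apply Rmult_lt_0_compat; [apply Rdiv_lt_0_compat|]; lra.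
    - lra.
    - eapply Rle_lt_trans; [|exact Hm2]. eapply Rle_trans; [|apply Rmax_r]. apply Rmax_r.
    - unfold P; lra. }
  replace (- (M - N - s)) with (s + N - M) in Hk by ring.
  unfold y. replace (n1 / m1 * Rpower P (s + N - M) * (1 + sqrt 5))
    with (2 * (n1 / (2 * m1) * (1 + sqrt 5) * Rpower P (s + N - M))) by (field; lra).
  lra.
Qed.

Lemma ce_lt_1 : c * e < 1.
Proof.
  pose proof m1_pos. pose proof n1_gt_1.
  assert (Hk : c * Rpower P (- (1 - N)) < 1).
  { apply (Rpower_root_bound _ _ m2).
    - rewrite c_eq. assert (0 < n1 / m1) by (apply Rdiv_lt_0_compat; lra).
      assert (0 < M * n1) by nra. nra.
    - lra.
    - eapply Rle_lt_trans; [|exact Hm2]. eapply Rle_trans; [|apply Rmax_r]. apply Rmax_l.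
    - unfold P; lra. }
  replace (- (1 - N)) with (N - 1) in Hk by ring. exact Hk.
Qed.

Lemma n_bounds : n1 <= n <= n1 * Rpower P N.
Proof.
  pose proof m2_gt_n2. pose proof n1_gt_1. unfold n, n0. split.
  - pose proof (Rpower_ge_1 n2 N ltac:(lra) ltac:(lra)). nra.
  - apply Rmult_le_compat_l; [lra|]. apply Rle_Rpower_l; unfold P; lra.
Qed.

Lemma u_le_Rpower : u <= n1 / m1 * Rpower P (N - M).
Proof.
  pose proof n_bounds. pose proof (Rpower_gt_0 P M). pose proof m1_pos.
  unfold u, m. fold P.
  replace (n1 / m1 * Rpower P (N - M)) with (n1 * Rpower P N / (m1 * Rpower P M)).
  - apply Rmult_le_compat_r; [|lra]. apply Rlt_le, Rinv_0_lt_compat. nra.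
  - unfold Rminus. rewrite Rpower_plus, Rpower_Ropp. field. split; lra.
Qed.

Lemma m_ge_m1 : m1 <= m T.
Proof.
  pose proof m1_pos. pose proof P_gt_1.
  pose proof (Rpower_ge_1 P M ltac:(lra) ltac:(lra)). unfold m. fold P. nra.
Qed.

Lemma u_pos : 0 < u.
Proof.
  pose proof n_bounds. pose proof m_ge_m1. pose proof m1_pos. pose proof n1_gt_1.
  apply Rdiv_lt_0_compat; lra.
Qed.

Lemma S_bounds : 0 <= S <= Rpower P s.
Proof.
  pose proof m2_gt_n2. split; [apply Rlt_le, Rpower_gt_0|].
  apply Rle_Rpower_l; unfold P in *; lra.
Qed.

Lemma u_le_y : u <= y.
Proof.
  pose proof u_le_Rpower. pose proof m1_pos. pose proof n1_gt_1. pose proof P_gt_1.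
  assert (Rpower P (N - M) <= Rpower P (s + N - M)) by (apply Rle_Rpower; lra).
  unfold y. apply Rle_trans with (n1 / m1 * Rpower P (N - M)); [lra|].
  apply Rmult_le_compat_l; [apply Rlt_le, Rdiv_lt_0_compat|]; lra.
Qed.

Lemma Su_le_y : S * u <= y.
Proof.
  pose proof u_le_Rpower. pose proof u_pos. pose proof S_bounds.
  apply Rle_trans with (Rpower P s * (n1 / m1 * Rpower P (N - M))); [apply Rmult_le_compat; lra|].
  unfold y. right. replace (s + N - M) with (s + (N - M)) by ring. rewrite Rpower_plus. ring.
Qed.

Lemma le_u (a : R) : m T * a <= n -> a <= u.
Proof.
  pose proof m_ge_m1. pose proof m1_pos. unfold u. intros Ha.
  apply (Rmult_le_reg_l (m T)); [lra|]. field_simplify; lra.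
Qed.

Lemma db_pos_below_line (a : R) : 0 <= a -> m T * a <= n0 N n1 n2 ->
  0 < 1 - Rpower (T + 1) s * a ^ 2 - a.
Proof.
  intros Ha Hma. fold S. apply le_u in Hma.
  pose proof S_bounds. pose proof Su_le_y. pose proof u_le_y.
  apply (db_pos_of_bounds _ _ y); [lra|lra|lra| |exact y_golden].
  apply Rle_trans with (S * u); [apply Rmult_le_compat_l|]; lra.
Qed.

Lemma Su2_le : S * u ^ 2 <= (n1 / m1) ^ 2 * e.
Proof.
  pose proof u_le_Rpower. pose proof u_pos. pose proof S_bounds.
  pose proof Su_le_y. pose proof P_gt_1.
  apply Rle_trans with (y * (n1 / m1 * Rpower P (N - M))).
  { replace (S * u ^ 2) with (S * u * u) by ring. apply Rmult_le_compat; nra. }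
  unfold y, e. replace (n1 / m1 * Rpower P (s + N - M) * (n1 / m1 * Rpower P (N - M)))
    with ((n1 / m1) ^ 2 * Rpower P (s + N - M + (N - M))) by (rewrite Rpower_plus; ring).
  apply Rmult_le_compat_l; [nra|]. apply Rle_Rpower; lra.
Qed.

Lemma u_le_e : u <= n1 / m1 * e.
Proof.
  pose proof u_le_Rpower. pose proof m1_pos. pose proof n1_gt_1. pose proof P_gt_1.
  assert (Rpower P (N - M) <= e) by (apply Rle_Rpower; lra).
  apply Rle_trans with (n1 / m1 * Rpower P (N - M)); [lra|].
  apply Rmult_le_compat_l; [apply Rlt_le, Rdiv_lt_0_compat|]; lra.
Qed.

Lemma dm_nonneg : 0 <= dm T.
Proof.
  pose proof m1_pos. pose proof (Rpower_gt_0 (m2 + T) (M - 1)). unfold dm.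
  apply Rmult_le_pos; [lra|]. apply Rmult_le_pos; lra.
Qed.

Lemma dm_u_le : dm T * u <= M * n1 * e.
Proof.
  pose proof u_le_Rpower. pose proof dm_nonneg. pose proof m1_pos.
  apply Rle_trans with (dm T * (n1 / m1 * Rpower P (N - M))); [apply Rmult_le_compat_l; lra|].
  unfold dm, e. fold P. right.
  replace (N - 1) with (M - 1 + (N - M)) by ring. rewrite Rpower_plus. field. lra.
Qed.

Lemma dm_le_m : dm T <= m T.
Proof.
  pose proof ce_lt_1. pose proof m_ge_m1. pose proof m1_pos.
  pose proof n1_gt_1. pose proof P_gt_1.
  assert (He : 0 < e) by apply Rpower_gt_0.
  assert (HPe : Rpower P (-1) <= e) by (apply Rle_Rpower; lra).
  assert (HMe : M * Rpower P (-1) < 1).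
  { rewrite c_eq in *.
    assert (0 < n1 / m1) by (apply Rdiv_lt_0_compat; lra).
    assert (M * Rpower P (-1) <= M * e) by (apply Rmult_le_compat_l; lra).
    assert (0 < M * e) by (apply Rmult_lt_0_compat; lra).
    assert (M * e <= M * n1 * e) by nra.
    assert (0 < n1 / m1 * e) by (apply Rmult_lt_0_compat; lra).
    assert (0 <= (n1 / m1) ^ 2 * e) by (apply Rmult_le_pos; [apply pow2_ge_0|lra]).
    lra. }
  replace (dm T) with (m T * (M * Rpower P (-1))).
  - nra.
  - unfold dm, m. fold P. replace (M - 1) with (M + -1) by ring. rewrite Rpower_plus. ring.
Qed.

Lemma dG_pos_on_line (a : R) : 0 <= a -> 0 <= m T * a - n0 N n1 n2 ->
  0 < - / 2 * (m T * a - n0 N n1 n2) ^ 2 - Rpower (T + 1) s * a ^ 2 - a + 1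
      - dm T * a + m T * (m T * a - n0 N n1 n2) * a.
Proof.
  intros Ha Hb. fold S n in Hb |- *.
  pose proof m_ge_m1. pose proof m1_pos. pose proof n1_gt_1. pose proof u_pos.
  pose proof S_bounds. pose proof dm_nonneg.
  assert (Hn : n = m T * u) by (unfold u; field; lra).
  rewrite Hn in *.
  apply dG_pos_of_bounds; [lra|lra|lra|apply (Rmult_le_reg_l (m T)); lra| |].
  - pose proof Su2_le. pose proof u_le_e. pose proof dm_u_le. pose proof ce_lt_1.
    rewrite c_eq in *. nra.
  - pose proof n_bounds. pose proof Su_le_y. pose proof dm_le_m. pose proof sqrt5_lt_m1_n1.
    pose proof (sqrt_pos 5). pose proof y_golden.
    assert (1 + 2 * y < sqrt 5).
    { pose proof (sqrt_sqrt 5 ltac:(lra)). nra. }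
    assert (m1 * (n1 - 1) <= m T * (n1 - 1)) by nra.
    nra.
Qed.

End AtTime.

Section Solution.

Variables a b : R -> R.
Hypotheses (Ha0 : filterlim a (at_right 0) (locally (a 0)))
  (Hb0 : filterlim b (at_right 0) (locally (b 0)))
  (Hdb : forall t, 0 < t ->
     is_derive b t (- / 2 * (b t) ^ 2 - Rpower (t + 1) s * (a t) ^ 2 - a t + 1))
  (Hda : forall t, 0 < t -> is_derive a t (- (b t) * a t))
  (HO : Omega M N m1 m2 n1 n2 (a 0) (b 0)).

Let G (t : R) : R := b t - m t * a t + n0 N n1 n2.
Let in_region (t : R) : Prop := 0 < a t /\ 0 < b t /\ 0 < G t.

Lemma is_derive_G (t : R) : 0 < t -> is_derive G t
  (- / 2 * b t ^ 2 - Rpower (t + 1) s * a t ^ 2 - a t + 1 - dm t * a t + m t * b t * a t).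
Proof.
  intros Ht. unfold G.
  replace (- / 2 * b t ^ 2 - Rpower (t + 1) s * a t ^ 2 - a t + 1 - dm t * a t + m t * b t * a t)
    with ((- / 2 * b t ^ 2 - Rpower (t + 1) s * a t ^ 2 - a t + 1)
          - (dm t * a t + m t * (- b t * a t)) + 0) by ring.
  apply (is_derive_plus (fun t => b t - m t * a t)); [|exact (is_derive_const _ t)].
  apply (is_derive_minus b (fun t => m t * a t)); [apply Hdb, Ht|].
  apply (is_derive_mult m a); [apply is_derive_m; lra|apply Hda, Ht|intros; apply Rmult_comm].
Qed.

Lemma G_right_continuous (T : R) : 0 <= T -> filterlim G (at_right T) (locally (G T)).
Proof.
  intros HT. apply filterlim_sub_mul_add.
  - exact (right_continuous_on_nonneg a _ Ha0 Hda T HT).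
  - exact (right_continuous_on_nonneg b _ Hb0 Hdb T HT).
  - eapply filterlim_filter_le_1; [apply filter_le_within|].
    exact (continuous_of_is_derive m T _ (is_derive_m T HT)).
Qed.

Lemma in_region_open (T : R) : 0 <= T -> in_region T -> at_right T in_region.
Proof.
  intros HT [HaT [HbT HGT]]. unfold in_region.
  apply filter_and; [|apply filter_and].
  - exact (filterlim_eventually_pos a _ (right_continuous_on_nonneg a _ Ha0 Hda T HT) HaT).
  - exact (filterlim_eventually_pos b _ (right_continuous_on_nonneg b _ Hb0 Hdb T HT) HbT).
  - exact (filterlim_eventually_pos G _ (G_right_continuous T HT) HGT).
Qed.

Lemma a_pos_at_first_exit (T : R) : 0 < T -> (forall u, 0 <= u < T -> in_region u) -> 0 < a T.
Proof.
  intros HT Hbefore.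
  assert (HaT : 0 <= a T).
  { apply (nonneg_of_pos_before a T _ HT (Hda T HT)). intros u Hu. apply Hbefore, Hu. }
  destruct (continuity_ab_maj b (T / 2) T) as [tmax [Hmax _]]; [lra| |].
  { intros t Ht. apply continuity_pt_filterlim.
    exact (continuous_of_is_derive b t _ (Hdb t ltac:(lra))). }
  apply (pos_of_is_derive_linear a b (T / 2) T (b tmax));
    [lra|intros; apply Hda; lra| |apply Hbefore; lra].
  intros t Ht. split; [|apply Hmax, Ht].
  destruct (Req_dec t T) as [->|HtT]; [exact HaT|]. apply Rlt_le, Hbefore. lra.
Qed.

Lemma in_region_at_first_exit (T : R) :
  0 < T -> (forall u, 0 <= u < T -> in_region u) -> in_region T.
Proof.
  intros HT Hbefore.
  assert (HaT := a_pos_at_first_exit T HT Hbefore).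
  assert (HbT : 0 <= b T).
  { apply (nonneg_of_pos_before b T _ HT (Hdb T HT)). intros u Hu. apply Hbefore, Hu. }
  assert (HGT : 0 <= G T).
  { apply (nonneg_of_pos_before G T _ HT (is_derive_G T HT)). intros u Hu. apply Hbefore, Hu. }
  assert (HbT' : 0 < b T).
  { destruct HbT as [|Hb0T]; [assumption|exfalso].
    assert (Hd := is_derive_nonpos_at_first_zero b T _ HT (Hdb T HT) (eq_sym Hb0T)
                    (fun u Hu => proj1 (proj2 (Hbefore u Hu)))).
    assert (Hmn : m T * a T <= n0 N n1 n2) by (unfold G in HGT; lra).
    pose proof (db_pos_below_line T (Rlt_le _ _ HT) (a T) (Rlt_le _ _ HaT) Hmn).
    rewrite <- Hb0T in Hd. lra. }
  split; [exact HaT|split; [exact HbT'|]].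
  destruct HGT as [|HG0]; [assumption|exfalso].
  assert (Hd := is_derive_nonpos_at_first_zero G T _ HT (is_derive_G T HT) (eq_sym HG0)
                  (fun u Hu => proj2 (proj2 (Hbefore u Hu)))).
  assert (Hb : b T = m T * a T - n0 N n1 n2) by (unfold G in HG0; lra).
  pose proof (dG_pos_on_line T (Rlt_le _ _ HT) (a T) (Rlt_le _ _ HaT) ltac:(lra)).
  rewrite Hb in Hd. lra.
Qed.

Lemma solution_positive (t : R) : 0 <= t -> 0 < a t /\ 0 < b t.
Proof.
  intros Ht.
  enough (in_region t) by (unfold in_region in *; tauto).
  apply real_induction; [|exact in_region_at_first_exit|exact in_region_open|exact Ht].
  unfold Omega, m0, n0 in HO. unfold in_region, G, m, n0. rewrite Rplus_0_r. lra.
Qed.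

End Solution.
End Estimates.

Theorem lemma4p3 (s M N m1 m2 n1 n2 : R) (a b : R -> R) :
  1 <= s ->
  0 < N -> N < 1 ->
  M > N + s ->
  n1 > 1 + sqrt 3 ->
  n2 > 1 ->
  m1 > sqrt 2 ->
  m2 > m2_bound s M N m1 n1 n2 ->
  (* (a, b) is a solution of the system on [0, +oo):
     continuous from the right at 0, differentiable for t > 0 *)
  filterlim a (at_right 0) (locally (a 0)) ->
  filterlim b (at_right 0) (locally (b 0)) ->
  (forall t, 0 < t ->
     is_derive b t (- / 2 * (b t) ^ 2 - Rpower (t + 1) s * (a t) ^ 2 - a t + 1)) ->
  (forall t, 0 < t -> is_derive a t (- (b t) * a t)) ->
  Omega M N m1 m2 n1 n2 (a 0) (b 0) ->
  forall t, 0 <= t -> 0 < b t /\ a t <= a 0.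
Proof.
  intros Hs HN0 HN1 HM Hn1 Hn2 Hm1 Hm2 Ha0 Hb0 Hdb Hda HO t Ht.
  pose proof (solution_positive s M N m1 m2 n1 n2 Hs HN0 HN1 HM Hn1 Hn2 Hm1 Hm2
                a b Ha0 Hb0 Hdb Hda HO) as Hpos.
  split; [apply Hpos, Ht|].
  apply (le_at_0_of_is_derive_nonpos a (fun t => - b t * a t) Ha0 Hda); [|exact Ht].
  intros u Hu. destruct (Hpos u ltac:(lra)). nra.
Qed.
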